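(* Let $\Lambda$ be a measurable space of hyperparameter configurations, and let $D$ be a set of allowable probability distributions on $\Lambda$ (the allowable random-search hyper-hyperparameters) such that for all $\mu,\nu\in D$ the Rényi-$\infty$-divergence satisfies $D_\infty(\mu\|\nu)\le\gamma$, i.e. $\mu(A)\le e^{\gamma}\nu(A)$ for every measurable $A\subseteq\Lambda$. Let $K\in\mathbb{N}$, let $t>0$, and consider the $(K,R)$-defended random-search EHPO with its defended reasoner $\mathcal{B}_*$ built from a naive reasoner $\mathcal{B}_{\mathrm{n}}$ (as defined in the context). If $$R\ \ge\ \sqrt{\frac{t\,\exp(\gamma K)}{K}},$$ then $\mathcal{B}_*$ is $t$-non-deceptive. In particular, a choice $R=O(\sqrt{t})$ suffices.
   Context: Random-search hyperparameter optimization (HPO): a trial consists of drawing a hyperparameter configuration from a chosen distribution $\mu\in D$ (independently of all other trials), training with it, and recording the outcome; a log is the sequence of recorded trials. A reasoner is given by a belief operator $\mathcal{B}$: for a log $L$ and a proposition $p$ (e.g. a comparative claim about algorithms), $\mathcal{B}p$ holds on $L$ if the reasoner concludes $p$ from $L$. The naive reasoner $\mathcal{B}_{\mathrm{n}}$ draws conclusions only from a single log with exactly $K$ trials, and it never concludes both $p$ and $\lnot p$ from the same log. The $(K,R)$-defended random-search EHPO uses the reasoner $\mathcal{B}_*$ which draws conclusions only from a single log with exactly $KR$ trials (produced by random search): to evaluate a proposition $p$ it splits the log into $R$ consecutive groups of $K$ trials each, evaluates $\mathcal{B}_{\mathrm{n}}$ on $p$ for each group, and concludes $p$ only if $\mathcal{B}_{\mathrm{n}}$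 concludes $p$ on all $R$ groups. An adversary may repeatedly run random-search trials using any allowable distributions in $D$ (possibly different ones, chosen adaptively), and may discard logs and present any log it has produced; its running time is the total number of trials it runs. For a statement $q$ about the reasoner's conclusions, $\Diamond_t q$ means that some adversary strategy produces, in expected time at most $t$, a log on which $q$ holds. The reasoner $\mathcal{B}_*$ is $t$-non-deceptive if for every proposition $p$ it is not the case that $\Diamond_t\mathcal{B}_*p\land\Diamond_t\mathcal{B}_*\lnot p$. *)

From HB Require Import structures.
From mathcomp Require Import all_boot all_order all_algebra.
From mathcomp Require Import all_classical all_reals all_analysis.
From mathcomp Require Import measurable_realfun.
Set Implicit Arguments. Unset Strict Implicit. Unset Printing Implicit Defensive.
Import Order.TTheory GRing.Theory Num.Theory.
Local Open Scope classical_set_scope.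
Local Open Scope ring_scope.

Section EHPO.
Context {R : realType} {dL : measure_display} {Lam : measurableType dL}.

(** Random search, as run by an adversary.  [Y m] is the configuration drawn
    in the m-th trial; [F m] is the information available to the adversary
    just before the m-th trial (it contains all previous trials, and may
    contain extra randomisation of the adversary); [mu m w] is the allowable
    distribution (chosen adaptively, i.e. [F m]-measurably) from which the
    m-th configuration is drawn, independently of everything else known so far:
    the conditional law of [Y m] given [F m] is [mu m]. *)
Definition random_search_run (D : set (probability Lam R))
  {d : measure_display} {Om : measurableType d} (P : probability Om R)
  (F : nat -> set (set Om)) (Y : nat -> Om -> Lam)
  (mu : nat -> Om -> probability Lam R) : Prop :=
  [/\ (forall m, sigma_algebra setT (F m) /\ F m `<=` measurable) /\
      (forall m n, (m <= n)%N -> F m `<=` F n),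
      forall i m, (i < m)%N -> forall A, measurable A -> F m (Y i @^-1` A),
      forall m w, D (mu m w),
      (forall m (A : set Lam), measurable A -> forall B : set \bar R, measurable B ->
         F m ((fun w => mu m w A) @^-1` B)) &
      forall m E (A : set Lam), F m E -> measurable A ->
         P (E `&` Y m @^-1` A) = (\int[P]_(w in E) mu m w A)%E].

Definition log_of {d : measure_display} {Om : measurableType d}
  (n : nat) (Y : nat -> Om -> Lam) (j : nat) (w : Om) : seq Lam :=
  mkseq (fun i => Y (j * n + i)%N w) n.

(** [diamond D n t q] is the modal statement "<>_t q": some adversary
    strategy, running random-search logs of [n] trials each with allowable
    distributions from [D] (chosen adaptively), produces in expected time
    (total number of trials) at most [t] a log on which [q] holds.  The
    adversary runs [T w] logs and presents the log number [J w < T w]. *)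
Definition diamond (D : set (probability Lam R)) (n : nat) (t : R)
  (q : seq Lam -> Prop) : Prop :=
  exists (d : measure_display) (Om : measurableType d) (P : probability Om R)
    (F : nat -> set (set Om)) (Y : nat -> Om -> Lam)
    (mu : nat -> Om -> probability Lam R) (T J : Om -> nat),
    [/\ random_search_run D P F Y mu,
        measurable_fun setT T,
        {ae P, forall w, (J w < T w)%N /\ q (log_of n Y (J w) w)} &
        (\int[P]_w (((n * T w)%N)%:R : R)%:E <= t%:E)%E].

Definition defended {Pr : Type} (K Rr : nat) (Bn : Pr -> seq Lam -> Prop)
  (p : Pr) (L : seq Lam) : Prop :=
  size L = (K * Rr)%N /\
  forall g : nat, (g < Rr)%N -> Bn p (take K (drop (g * K) L)).

Definition non_deceptive {Pr : Type} (neg : Pr -> Pr)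
  (D : set (probability Lam R)) (n : nat) (t : R)
  (B : Pr -> seq Lam -> Prop) : Prop :=
  forall p : Pr, ~ (diamond D n t (B p) /\ diamond D n t (B (neg p))).

End EHPO.

(* Suppose adversaries could produce, in expected time t, defended logs for
   both p and ~ p.  Each trial is drawn from an allowable distribution chosen
   from the past, so given any past event the law of the next K trials of one
   adversary is at most X := e^(gamma K) times that of the other.  The naive
   reasoner's acceptance sets for p and ~ p are disjoint; hence they cannot
   both be hit with conditional probability above q := X / (1 + X), one in
   each run.  The adversary on the losing side gets each of the R blocks of a
   log accepted with conditional probability at most q, the whole log with
   probability at most q^R, and thus needs at least K R (1 - (1 - q^R)^M) / q^R
   trials in expectation, for every M.  Bernoulli's inequality gives
   q^R <= X / (X + R), and R >= sqrt (t X / K) makes K R / q^R exceed t. *)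

From HB Require Import structures.
From mathcomp Require Import all_boot all_order all_algebra.
From mathcomp Require Import all_classical all_reals all_analysis.
From mathcomp Require Import measurable_realfun.
From mathcomp Require Import ring lra zify.
Import Order.TTheory GRing.Theory Num.Theory.
Import numFieldNormedType.Exports.
Local Open Scope classical_set_scope.
Local Open Scope ring_scope.

Set Implicit Arguments. Unset Strict Implicit. Unset Printing Implicit Defensive.

Section measurable_rectangles.
Context {d1 d2 : measure_display} (T1 : measurableType d1) (T2 : measurableType d2).

(* A copy of [T1 * T2] whose measurable sets are the rectangles, so that
   [SetRing] provides the ring they generate. *)
Definition rectangle_type := (T1 * T2)%type.
HB.instance Definition _ := Pointed.on rectangle_type.

Definition measurable_rectangles : set (set rectangle_type) :=
  [set A `*` B | A in measurable & B in measurable].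

Lemma measurable_rectangles0 : measurable_rectangles set0.
Proof. by exists set0 => //; exists set0 => //; rewrite setX0. Qed.

Lemma measurable_rectanglesI : setI_closed measurable_rectangles.
Proof.
move=> _ _ [X1 mX1 [X2 mX2 <-]] [Y1 mY1 [Y2 mY2 <-]].
exists (X1 `&` Y1); first exact: measurableI.
by exists (X2 `&` Y2); [exact: measurableI|rewrite setXI].
Qed.

Lemma measurable_rectanglesD : semi_setD_closed measurable_rectangles.
Proof.
move=> _ _ [X1 mX1 [X2 mX2 <-]] [Y1 mY1 [Y2 mY2 <-]].
exists [set (X1 `\` Y1) `*` X2; (X1 `&` Y1) `*` (X2 `\` Y2)]; split.
- exact: finite_set2.
- move=> _ [->|->]; first by exists (X1 `\` Y1); [exact: measurableD|exists X2].
  by exists (X1 `&` Y1); [exact: measurableI|exists (X2 `\` Y2); [exact: measurableD|]].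
- rewrite bigcup_setU !bigcup_set1; apply/seteqP; split => -[x y] /=.
    move=> [[xX1 yX2] /not_andP nxy].
    by case: (pselect (Y1 x)) => xY1; [right|left]; split => //; case: nxy.
  by move=> [[[xX1 nxY1] yX2]|[[xX1 xY1] [yX2 nyY2]]]; split => //; case.
- by move=> A B [->|->] [->|->] //= [[x y]] /=; tauto.
Qed.

HB.instance Definition _ := @isSemiRingOfSets.Build default_measure_display
  rectangle_type measurable_rectangles measurable_rectangles0
  measurable_rectanglesI measurable_rectanglesD.

End measurable_rectangles.

(* A monotone-class argument over the ring generated by the rectangles. *)
Lemma le_measure_prod {d1 d2 : measure_display} (T1 : measurableType d1)
    (T2 : measurableType d2) (R : realType) (M1 M2 : {measure set (T1 * T2) -> \bar R}) :
  (M2 setT < +oo)%E ->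
  (forall A B, measurable A -> measurable B -> M1 (A `*` B) <= M2 (A `*` B))%E ->
  forall S, measurable S -> (M1 S <= M2 S)%E.
Proof.
move=> M2oo M12 S mS.
have M1oo : (M1 setT < +oo)%E.
  by apply: le_lt_trans M2oo; rewrite -setXTT; exact: M12.
pose G := [set S : set (T1 * T2) | measurable S /\ (M1 S <= M2 S)%E].
have finite_lt (M : {measure set (T1 * T2) -> \bar R}) X :
    (M setT < +oo)%E -> measurable X -> (M X < +oo)%E.
  by move=> MT mX; apply: le_lt_trans MT; apply: le_measure; rewrite ?inE.
have monoG : monotone G.
  split=> F monoF GF; have mF i : measurable (F i) by case: (GF i).
  - have mU : measurable (\bigcup_i F i) by exact: bigcup_measurable.
    split=> //; apply: lee_cvg_to (nondecreasing_cvg_mu mF mU monoF)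
      (nondecreasing_cvg_mu mF mU monoF) _.
    by apply: nearW => i; case: (GF i).
  - have mI : measurable (\bigcap_i F i) by exact: bigcap_measurable.
    split=> //; apply: lee_cvg_to
      (nonincreasing_cvg_mu (finite_lt _ _ M1oo (mF 0%N)) mF mI monoF)
      (nonincreasing_cvg_mu (finite_lt _ _ M2oo (mF 0%N)) mF mI monoF) _.
    by apply: nearW => i; case: (GF i).
pose ring := @measurable _ (SetRing.type (rectangle_type T1 T2)) : set (set (T1 * T2)).
have ringR : setring ring.
  split; first exact: (@measurable0 _ (SetRing.type (rectangle_type T1 T2))).
  - exact: (@measurableU _ (SetRing.type (rectangle_type T1 T2))).
  - exact: (@measurableD _ (SetRing.type (rectangle_type T1 T2))).
have ringG : ring `<=` G.
  move=> _ /(@SetRing.ring_finite_set _ (rectangle_type T1 T2)) [B [Bfin _ Btriv Brect ->]].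
  have mB X : B X -> measurable (X : set (T1 * T2)).
    by move=> /mem_set /Brect [A mA [C mC <-]]; exact: measurableX.
  split; first exact: fin_bigcup_measurable.
  rewrite !measure_fin_bigcup//; apply: lee_fsum => // X BX.
  by have [A mA [C mC <-]] := Brect X (mem_set BX); exact: M12.
suff : <<sr ring>> S by move/(monotone_setring_sub_g_sigma_ring monoG ringR ringG) => [].
move: S mS; rewrite measurable_prod_measurableType; apply: smallest_sub.
  have [s0 sD sU] := smallest_sigma_ring ring; split => // X sX.
  apply: sD => //; apply: sub_gen_smallest.
  apply: (@SetRing.measurable_subring _ (rectangle_type T1 T2)).
  by exists setT => //; exists setT => //; rewrite setXTT.
move=> _ [A mA [C mC <-]]; apply: sub_gen_smallest.
by apply: (@SetRing.measurable_subring _ (rectangle_type T1 T2)); exists A => //; exists C.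
Qed.

Section prob.
Context {d : measure_display} {T : measurableType d} {R : realType} (P : probability T R).

Definition prob (A : set T) : R := fine (P A).

Lemma probE A : measurable A -> P A = (prob A)%:E.
Proof. by move=> mA; rewrite fineK // fin_num_measure. Qed.

Lemma prob_ge0 A : 0 <= prob A.
Proof. exact/fine_ge0/measure_ge0. Qed.

Lemma le_prob A B : measurable A -> measurable B -> A `<=` B -> prob A <= prob B.
Proof. by move=> mA mB AB; rewrite -lee_fin -!probE //; apply: le_measure; rewrite ?inE. Qed.

Lemma prob_setIC A B : measurable A -> measurable B ->
  prob A = prob (A `&` B) + prob (A `&` ~` B).
Proof.
move=> mA mB; have mAC := measurableI _ _ mA (measurableC mB).
apply/EFin_inj; rewrite EFinD -!probE //; last exact: measurableI.
rewrite -measureU //; first by rewrite -setIUr setUCr setIT.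
- exact: measurableI.
- by rewrite setIACA setICr !setI0.
Qed.

End prob.

Lemma le_prob_preimage_prod {d1 d2 e1 e2 : measure_display}
    (T1 : measurableType d1) (T2 : measurableType d2) (R : realType)
    (O1 : measurableType e1) (O2 : measurableType e2)
    (P1 : probability O1 R) (P2 : probability O2 R) (E1 : set O1) (E2 : set O2)
    (g1 : O1 -> T1 * T2) (g2 : O2 -> T1 * T2) (a b : R) :
  measurable E1 -> measurable E2 -> measurable_fun setT g1 -> measurable_fun setT g2 ->
  0 <= a -> 0 <= b ->
  (forall A B, measurable A -> measurable B ->
    a * prob P1 (E1 `&` g1 @^-1` (A `*` B)) <= b * prob P2 (E2 `&` g2 @^-1` (A `*` B))) ->
  forall S, measurable S ->
    a * prob P1 (E1 `&` g1 @^-1` S) <= b * prob P2 (E2 `&` g2 @^-1` S).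
Proof.
move=> mE1 mE2 mg1 mg2 a0 b0 le_rect.
have probE_preimage (O : measurableType _) (Q : probability O R) (g : O -> T1 * T2) E X :
    measurable_fun setT g -> measurable E -> measurable X ->
    Q (g @^-1` X `&` E) = (prob Q (E `&` g @^-1` X))%:E.
  move=> mg mE mX; rewrite setIC probE //.
  by apply: measurableI => //; rewrite -[Z in measurable Z]setTI; exact: mg.
move=> S mS; rewrite -lee_fin !EFinM -!probE_preimage //.
apply: (@le_measure_prod _ _ T1 T2 R (mscale (NngNum a0) (pushforward (mrestr P1 mE1) g1))
  (mscale (NngNum b0) (pushforward (mrestr P2 mE2) g2))) => // [|A B mA mB].
  change (b%:E * P2 (g2 @^-1` setT `&` E2) < +oo)%E.
  by rewrite probE_preimage // -EFinM ltry.
change (a%:E * P1 (g1 @^-1` (A `*` B) `&` E1) <= b%:E * P2 (g2 @^-1` (A `*` B) `&` E2))%E.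
have mAB : measurable (A `*` B) by exact: measurableX.
by rewrite !probE_preimage // -!EFinM lee_fin le_rect.
Qed.

Definition trials {Om Lam : Type} (Y : nat -> Om -> Lam) (m n : nat) (w : Om) : n.-tuple Lam :=
  [tuple Y (m + i)%N w | i < n].

Lemma trialsS {Om Lam : Type} (Y : nat -> Om -> Lam) m n w :
  trials Y m n.+1 w = [tuple of Y m w :: trials Y m.+1 n w].
Proof.
apply: eq_from_tnth => i; rewrite tnth_mktuple.
case: (unliftP ord0 i) => [j ->|->]; last by rewrite (tnth_nth (Y m w)) /= addn0.
by rewrite tnthS tnth_mktuple lift0 addSnnS.
Qed.

Lemma trials_preimageS {Om : Type} {dL : measure_display} {Lam : measurableType dL}
    (Y : nat -> Om -> Lam) m n (S : set (n.+1.-tuple Lam)) :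
  trials Y m n.+1 @^-1` S = (fun w => (Y m w, trials Y m.+1 n w)) @^-1`
    ((fun p : Lam * n.-tuple Lam => [tuple of p.1 :: p.2]) @^-1` S).
Proof. by apply/seteqP; split => w; rewrite /preimage /= trialsS. Qed.

Lemma log_of_block {d dL : measure_display} {Om : measurableType d} {Lam : measurableType dL}
    (Y : nat -> Om -> Lam) K Rr j g w : (g < Rr)%N ->
  take K (drop (g * K)%N (log_of (K * Rr)%N Y j w)) = trials Y (j * (K * Rr) + g * K)%N K w.
Proof.
move=> gR; have gK : (g * K + K <= K * Rr)%N by rewrite addnC -mulSn mulnC leq_mul2l gR orbT.
have sK : (K <= size (drop (g * K) (log_of (K * Rr) Y j w)))%N.
  by rewrite size_drop size_mkseq; lia.
apply: (@eq_from_nth _ (Y 0%N w)) => [|i]; first by rewrite size_takel // size_tuple.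
rewrite size_takel // => iK.
rewrite nth_take // nth_drop nth_mkseq; last by rewrite (leq_trans _ gK) // ltn_add2l.
by rewrite -[in RHS]/(nat_of_ord (Ordinal iK)) nth_mktuple addnA.
Qed.

Section random_search_run.
Context {R : realType} {dL : measure_display} {Lam : measurableType dL}
  (D : set (probability Lam R)) {d : measure_display} {Om : measurableType d}
  (P : probability Om R) (F : nat -> set (set Om)) (Y : nat -> Om -> Lam)
  (mu : nat -> Om -> probability Lam R).
Hypothesis run : random_search_run D P F Y mu.

Lemma run_sigma_algebra m : <<s F m>> = F m.
Proof. by case: run => [[/(_ m) [+ _]]] *; exact: sigma_algebra_id. Qed.

Lemma run_measurable m E : F m E -> measurable E.
Proof. by case: run => [[/(_ m) [_ +]]] *; exact. Qed.

Lemma run_setT m : F m setT.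
Proof. by rewrite -run_sigma_algebra; exact: (@measurableT _ (g_sigma_algebraType (F m))). Qed.

Lemma run_setI m E E' : F m E -> F m E' -> F m (E `&` E').
Proof.
rewrite -run_sigma_algebra; exact: (@measurableI _ (g_sigma_algebraType (F m))).
Qed.

Lemma run_setC m E : F m E -> F m (~` E).
Proof. rewrite -run_sigma_algebra; exact: (@measurableC _ (g_sigma_algebraType (F m))). Qed.

Lemma run_le m n E : (m <= n)%N -> F m E -> F n E.
Proof. by move=> mn FE; case: run => [[_ h]] *; exact: h mn E FE. Qed.

Lemma run_trial i m A : (i < m)%N -> measurable A -> F m (Y i @^-1` A).
Proof. by move=> im mA; case: run => _ h *; exact: h. Qed.

Lemma run_setI_trial m E A : F m E -> measurable A -> F m.+1 (E `&` Y m @^-1` A).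
Proof. by move=> FE mA; apply: run_setI (run_le (leqnSn m) FE) (run_trial (ltnSn m) mA). Qed.

Lemma run_allowable m w : D (mu m w).
Proof. by case: run. Qed.

Lemma measurable_run_distribution m A : measurable A -> measurable_fun setT (fun w => mu m w A).
Proof.
case: run => _ _ _ h _ mA _ B mB; rewrite setTI.
exact: run_measurable (h m A mA B mB).
Qed.

Lemma run_kernel m E A : F m E -> measurable A ->
  P (E `&` Y m @^-1` A) = (\int[P]_(w in E) mu m w A)%E.
Proof. by case: run => _ _ _ _; apply. Qed.

Lemma measurable_trial i : measurable_fun setT (Y i).
Proof. by move=> _ A mA; rewrite setTI; apply: (@run_measurable i.+1); exact: run_trial. Qed.

Lemma run_trials m n S : measurable S -> F (m + n) (trials Y m n @^-1` S).
Proof.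
move=> mS; rewrite -run_sigma_algebra.
suff mZ : measurable_fun [set: g_sigma_algebraType (F (m + n))] (trials Y m n).
  by have := mZ measurableT S mS; rewrite setTI.
apply/measurable_fun_tnthP => i _ B mB; rewrite setTI.
apply: sub_sigma_algebra.
have -> : ((fun t : n.-tuple Lam => tnth t i) \o trials Y m n) @^-1` B = Y (m + i)%N @^-1` B.
  by apply/seteqP; split => w /=; rewrite tnth_mktuple.
by apply: run_trial => //; rewrite ltn_add2l.
Qed.

Lemma measurable_trials m n : measurable_fun setT (trials Y m n).
Proof. by move=> _ S mS; rewrite setTI; exact: run_measurable (run_trials m mS). Qed.

End random_search_run.

Lemma ratio_le_trans (R : realFieldType) (a1 a2 p1 p2 p1' p2' x y : R) :
  0 <= a2 -> 0 <= p1 -> 0 <= p2 -> 0 <= p2' -> 0 <= x -> 0 <= y ->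
  a1 <= p1' -> p2' * a1 <= x * p1' * a2 -> p2 * p1' <= y * p1 * p2' ->
  p2 * a1 <= x * y * p1 * a2.
Proof.
move=> a20 p10 p20 p2'0 x0 y0 a1p1' h1 h2.
have [p2'_eq0|p2'_neq0] := eqVneq p2' 0.
  rewrite p2'_eq0 mulr0 in h2.
  have : 0 <= x * y * p1 * a2 by rewrite !mulr_ge0.
  have := ler_wpM2l p20 a1p1'; lra.
have p2'_gt0 : 0 < p2' by rewrite lt_def p2'_neq0.
rewrite -(ler_pM2l p2'_gt0).
have := ler_wpM2l p20 h1; have := ler_wpM2l (mulr_ge0 x0 a20) h2.
nra.
Qed.

Lemma frequent_blocks_contra (R : realFieldType) (X a1 a2 b2 p1 p2 : R) :
  0 <= X -> 0 <= p1 -> 0 <= a2 ->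
  X / (1 + X) * p1 < a1 -> X / (1 + X) * p2 < b2 -> b2 <= p2 - a2 ->
  p2 * a1 <= X * p1 * a2 -> False.
Proof.
move=> X0 p10 a20; set q := X / (1 + X) => qa1 qb2 b2a2 cmp.
have X1 : 0 < 1 + X by rewrite ltr_pwDl.
have Xq : X * (1 - q) = q by rewrite /q; field; rewrite gt_eqF.
have q1 : 0 < 1 - q by rewrite /q subr_gt0 ltr_pdivrMr // mul1r ltrDr.
clearbody q.
have a2q : a2 < (1 - q) * p2 by lra.
have p2_gt0 : 0 < p2 by have := mulr_ge0 (ltW q1) (ltW (le_lt_trans a20 a2q)); nra.
have : X * p1 * a2 <= q * p1 * p2.
  have -> : q * p1 * p2 = X * p1 * ((1 - q) * p2) by rewrite -[in LHS]Xq; ring.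
  by apply: ler_wpM2l; [exact: mulr_ge0|exact: ltW].
have : q * p1 * p2 < a1 * p2 by rewrite ltr_pM2r.
lra.
Qed.

Definition rare_block {R : realType} {dL : measure_display} {Lam : measurableType dL}
    {d : measure_display} {Om : measurableType d} (P : probability Om R)
    (F : nat -> set (set Om)) (Y : nat -> Om -> Lam) (K : nat) (A : set (K.-tuple Lam))
    (q : R) : Prop :=
  forall m E, F m E -> prob P (E `&` trials Y m K @^-1` A) <= q * prob P E.

Section two_runs.
Context {R : realType} {dL : measure_display} {Lam : measurableType dL}
  (D : set (probability Lam R)) (gamma : R).
Hypothesis hD : forall mu nu : probability Lam R, D mu -> D nu ->
  forall A, measurable A -> (mu A <= (expR gamma)%:E * nu A)%E.
Context {d1 : measure_display} {Om1 : measurableType d1} (P1 : probability Om1 R)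
  (F1 : nat -> set (set Om1)) (Y1 : nat -> Om1 -> Lam) (mu1 : nat -> Om1 -> probability Lam R).
Hypothesis run1 : random_search_run D P1 F1 Y1 mu1.
Context {d2 : measure_display} {Om2 : measurableType d2} (P2 : probability Om2 R)
  (F2 : nat -> set (set Om2)) (Y2 : nat -> Om2 -> Lam) (mu2 : nat -> Om2 -> probability Lam R).
Hypothesis run2 : random_search_run D P2 F2 Y2 mu2.

Local Notation x := (expR gamma).

Lemma prob_trial_ratio_le m1 m2 E1 E2 A : F1 m1 E1 -> F2 m2 E2 -> measurable A ->
  prob P2 E2 * prob P1 (E1 `&` Y1 m1 @^-1` A) <=
  x * prob P1 E1 * prob P2 (E2 `&` Y2 m2 @^-1` A).
Proof.
move=> FE1 FE2 mA.
have mE1 := run_measurable run1 FE1; have mE2 := run_measurable run2 FE2.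
have mEA1 := run_measurable run1 (run_setI_trial run1 FE1 mA).
have mEA2 := run_measurable run2 (run_setI_trial run2 FE2 mA).
rewrite -lee_fin !EFinM -!probE // (run_kernel run1) // (run_kernel run2) //.
set I1 := (\int[P1]_(w in E1) mu1 m1 w A)%E.
have mmu2 := measurable_funTS (measurable_run_distribution run2 m2 mA) (D := E2).
have le_I1 w : (I1 <= (x%:E * P1 E1) * mu2 m2 w A)%E.
  apply: (@le_trans _ _ (\int[P1]_(v in E1) cst (x%:E * mu2 m2 w A) v)%E).
    apply: ge0_le_integral => //.
    - exact: measurable_funTS (measurable_run_distribution run1 m1 mA).
    - by move=> v _; apply: hD; [exact: (run_allowable run1)|exact: (run_allowable run2)|].
  by rewrite integral_cst // muleAC.
have c0 : (0 <= x%:E * P1 E1)%E by rewrite mule_ge0 ?lee_fin ?expR_ge0.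
rewrite muleC -(integral_cst P2 mE2) -ge0_integralZl //.
apply: ge0_le_integral => //; last exact: measurable_funeM.
by move=> w _; rewrite /cst /I1; apply: integral_ge0 => v _; exact: measure_ge0.
Qed.

Lemma prob_trials_ratio_le n m1 m2 E1 E2 S : F1 m1 E1 -> F2 m2 E2 -> measurable S ->
  prob P2 E2 * prob P1 (E1 `&` trials Y1 m1 n @^-1` S) <=
  x ^+ n * prob P1 E1 * prob P2 (E2 `&` trials Y2 m2 n @^-1` S).
Proof.
elim: n m1 m2 E1 E2 S => [|n IH] m1 m2 E1 E2 S FE1 FE2 mS.
  have trials0 (Om : Type) (Y : nat -> Om -> Lam) m : trials Y m 0 = cst [tuple].
    by apply/funext => w; exact: tuple0.
  rewrite !trials0 !preimage_cst expr0 mul1r.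
  case: ifP => _; first by rewrite !setIT mulrC.
  by rewrite !setI0 /prob !measure0 !mulr0.
have mE1 := run_measurable run1 FE1; have mE2 := run_measurable run2 FE2.
have mS' : measurable ((fun p : Lam * n.-tuple Lam => [tuple of p.1 :: p.2]) @^-1` S).
  by have := measurable_cons measurable_fst measurable_snd measurableT mS; rewrite setTI.
have mg1 := measurable_fun_pair (measurable_trial run1 m1)
  (measurable_trials run1 m1.+1 (n := n)).
have mg2 := measurable_fun_pair (measurable_trial run2 m2)
  (measurable_trials run2 m2.+1 (n := n)).
have b0 : 0 <= x ^+ n.+1 * prob P1 E1 by rewrite mulr_ge0 ?exprn_ge0 ?expR_ge0 ?prob_ge0.
rewrite !trials_preimageS; apply: le_prob_preimage_prod => //; first exact: prob_ge0.
move=> A B mA mB.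
have FE1' := run_setI_trial run1 FE1 mA; have FE2' := run_setI_trial run2 FE2 mA.
have mE1' := run_measurable run1 FE1'.
have rect (Om : Type) (Y : nat -> Om -> Lam) m E :
    E `&` (fun w => (Y m w, trials Y m.+1 n w)) @^-1` (A `*` B) =
    (E `&` Y m @^-1` A) `&` trials Y m.+1 n @^-1` B.
  by rewrite -setIA.
have mB1 := run_measurable run1 (run_trials run1 m1.+1 (n := n) mB).
have le_a1 := le_prob P1 (measurableI _ _ mE1' mB1) mE1' (@subIsetl _ _ _).
rewrite !rect exprSr.
exact: ratio_le_trans (prob_ge0 _ _) (prob_ge0 _ _) (prob_ge0 _ _) (prob_ge0 _ _)
  (exprn_ge0 n (expR_ge0 gamma)) (expR_ge0 gamma) le_a1 (IH _ _ _ _ _ FE1' FE2' mB)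
  (prob_trial_ratio_le FE1 FE2 mA).
Qed.

Lemma rare_block_dichotomy K (A B : set (K.-tuple Lam)) :
  measurable A -> measurable B -> A `&` B = set0 ->
  rare_block P1 F1 Y1 A (x ^+ K / (1 + x ^+ K)) \/
  rare_block P2 F2 Y2 B (x ^+ K / (1 + x ^+ K)).
Proof.
move=> mA mB AB0.
have [|not_rare1] := pselect (rare_block P1 F1 Y1 A (x ^+ K / (1 + x ^+ K))); first by left.
right => m2 E2 FE2; rewrite leNgt; apply/negP => hit2.
apply: not_rare1 => m1 E1 FE1; rewrite leNgt; apply/negP => hit1.
have mE2 := run_measurable run2 FE2.
have mZA := run_measurable run2 (run_trials run2 m2 mA).
have mZB := run_measurable run2 (run_trials run2 m2 mB).
have disjAB : prob P2 (E2 `&` trials Y2 m2 K @^-1` B) <=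
    prob P2 E2 - prob P2 (E2 `&` trials Y2 m2 K @^-1` A).
  rewrite (prob_setIC P2 mE2 mZA) addrAC subrr add0r.
  apply: le_prob; [exact: measurableI|exact: measurableI _ _ mE2 (measurableC mZA)|].
  move=> w [E2w Bw]; split => // Aw.
  by have : (A `&` B) (trials Y2 m2 K w) by []; rewrite AB0.
exact: frequent_blocks_contra (exprn_ge0 K (expR_ge0 gamma)) (prob_ge0 _ _) (prob_ge0 _ _)
  hit1 hit2 disjAB (prob_trials_ratio_le FE1 FE2 mA).
Qed.

End two_runs.

Lemma sum_ltn_minn (M t : nat) : (\sum_(k < M) (k < t : nat))%N = minn M t.
Proof.
elim: M => [|M IH]; first by rewrite big_ord0 min0n.
by rewrite big_ord_recr /= IH; case: (ltnP M t) => Mt; rewrite ?addn1 ?addn0; lia.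
Qed.

Lemma sum_prob_ltn_le_integral {d : measure_display} {Om : measurableType d} {R : realType}
    (mu : {measure set Om -> \bar R}) (T : Om -> nat) : measurable_fun setT T ->
  forall M, (\sum_(k < M) mu [set w | (k < T w)%N] <= \int[mu]_w ((T w)%:R)%:E)%E.
Proof.
move=> mT M.
have mS k : measurable [set w | (k < T w)%N].
  by have := mT measurableT [set i | (k < i)%N]; rewrite setTI; apply.
have mind k : measurable_fun setT (fun w => (\1_[set w | (k < T w)%N] w : R)%:E).
  by apply/measurable_EFinP; apply/measurable_indicP; exact: mS.
rewrite (eq_bigr (fun k : 'I_M => \int[mu]_w (\1_[set w | (k < T w)%N] w : R)%:E)%E); last first.
  by move=> k _; rewrite integral_indic // setIT.
rewrite -ge0_integral_sum //; apply: ge0_le_integral => //.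
- by move=> w _; apply: sume_ge0 => k _; rewrite lee_fin.
- exact: emeasurable_sum.
- exact: (measurableT_comp (f := fun k : nat => (k%:R : R)%:E)).
move=> w _; rewrite sumEFin lee_fin.
under eq_bigr do rewrite indicE.
have -> : \sum_(k < M) ((w \in [set w | (k < T w)%N])%:R : R) =
    (\sum_(k < M) (k < T w : nat))%:R.
  rewrite natr_sum; apply: eq_bigr => k _.
  by rewrite (_ : w \in _ = (k < T w)%N) //; apply/idP/idP => [/set_mem|/mem_set].
by rewrite sum_ltn_minn ler_nat geq_minr.
Qed.

Section cost.
Context {R : realType} {dL : measure_display} {Lam : measurableType dL}
  (D : set (probability Lam R)) {d : measure_display} {Om : measurableType d}
  (P : probability Om R) (F : nat -> set (set Om)) (Y : nat -> Om -> Lam)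
  (mu : nat -> Om -> probability Lam R).
Hypothesis run : random_search_run D P F Y mu.
Variables (K Rr : nat) (A : set (K.-tuple Lam)) (q : R).
Hypotheses (mA : measurable A) (q0 : 0 <= q) (q1 : q <= 1) (rareA : rare_block P F Y A q).

Local Notation n := (K * Rr)%N.

Definition blocks_in j r : set Om :=
  [set w | forall g, (g < r)%N -> A (trials Y (j * n + g * K)%N K w)].

Lemma blocks_in0 j : blocks_in j 0 = setT.
Proof. by apply/seteqP; split => // w _ g. Qed.

Lemma blocks_inS j r :
  blocks_in j r.+1 = blocks_in j r `&` trials Y (j * n + r * K)%N K @^-1` A.
Proof.
apply/seteqP; split => w /=.
  by move=> h; split => [g gr|]; apply: h => //; exact: ltnW.
by move=> [h Ar] g; rewrite ltnS leq_eqVlt => /orP[/eqP->//|]; exact: h.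
Qed.

Lemma run_blocks_in j r : F (j * n + r * K)%N (blocks_in j r).
Proof.
elim: r => [|r IH]; first by rewrite blocks_in0; apply: (run_setT run).
rewrite blocks_inS mulSn addnCA; apply: (run_setI run).
  exact: (run_le run (leq_addl _ _) IH).
by rewrite addnC; exact: (run_trials run _ mA).
Qed.

Lemma prob_blocks_in_le j r E : F (j * n)%N E ->
  prob P (E `&` blocks_in j r) <= q ^+ r * prob P E.
Proof.
move=> FE; elim: r => [|r IH]; first by rewrite blocks_in0 setIT expr0 mul1r.
rewrite blocks_inS setIA exprS -mulrA; apply: le_trans (ler_wpM2l q0 IH).
exact: rareA (run_setI run (run_le run (leq_addr _ _) FE) (run_blocks_in j r)).
Qed.

Definition no_log_accepted k : set Om := [set w | forall j, (j < k)%N -> ~ blocks_in j Rr w].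

Lemma no_log_accepted0 : no_log_accepted 0 = setT.
Proof. by apply/seteqP; split => // w _ j. Qed.

Lemma no_log_acceptedS k : no_log_accepted k.+1 = no_log_accepted k `&` ~` blocks_in k Rr.
Proof.
apply/seteqP; split => w /=.
  by move=> h; split => [j jk|]; apply: h => //; exact: ltnW.
by move=> [h nk] j; rewrite ltnS leq_eqVlt => /orP[/eqP->//|]; exact: h.
Qed.

Lemma run_no_log_accepted k : F (k * n)%N (no_log_accepted k).
Proof.
elim: k => [|k IH]; first by rewrite no_log_accepted0; exact: (run_setT run).
rewrite no_log_acceptedS; apply: (run_setI run).
  by apply: (run_le run _ IH); rewrite leq_mul2r leqnSn orbT.
apply: (run_setC run).
have -> : (k.+1 * n = k * n + Rr * K)%N by rewrite mulSn addnC [(Rr * K)%N]mulnC.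
exact: run_blocks_in.
Qed.

Lemma prob_no_log_accepted_ge k : (1 - q ^+ Rr) ^+ k <= prob P (no_log_accepted k).
Proof.
elim: k => [|k IH]; first by rewrite expr0 no_log_accepted0 /prob probability_setT.
have FN := run_no_log_accepted k.
have mN := run_measurable run FN.
have mB := run_measurable run (run_blocks_in k Rr).
have s1 : 0 <= 1 - q ^+ Rr by rewrite subr_ge0 exprn_ile1.
have := prob_blocks_in_le Rr FN; have := prob_setIC P mN mB; have := ler_wpM2l s1 IH.
rewrite no_log_acceptedS exprSr; lra.
Qed.

Lemma expected_cost_ge (T J : Om -> nat) : measurable_fun setT T ->
    {ae P, forall w, (J w < T w)%N /\ blocks_in (J w) Rr w} ->
  forall M, ((n%:R * \sum_(k < M) (1 - q ^+ Rr) ^+ k)%:E <=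
    \int[P]_w (((n * T w)%N)%:R)%:E)%E.
Proof.
move=> mT [N [mN PN0 accepted]] M.
have mTk k : measurable [set w | (k < T w)%N].
  by have := mT measurableT [set i | (k < i)%N]; rewrite setTI; apply.
have lt_T k : (1 - q ^+ Rr) ^+ k <= prob P [set w | (k < T w)%N].
  apply: le_trans (prob_no_log_accepted_ge k) _.
  have mNk := run_measurable run (run_no_log_accepted k).
  rewrite -lee_fin -!probE //.
  apply: (le_trans (le_measure _ _ _ (_ : _ `<=` [set w | (k < T w)%N] `|` N)));
    rewrite ?inE //.
  - exact: measurableU.
  - move=> w Nkw; have [|notN] := pselect (N w); [by right|left].
    have [JT Jacc] : (J w < T w)%N /\ blocks_in (J w) Rr w by apply: contrapT => /accepted.
    rewrite /= ltnNge; apply/negP => Tk; exact: Nkw _ (leq_trans JT Tk) Jacc.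
  - by rewrite -[leRHS]adde0 -PN0; exact: measureU2.
under eq_integral do rewrite natrM EFinM.
rewrite ge0_integralZl_EFin //; last first.
  exact: (measurableT_comp (f := fun k : nat => (k%:R : R)%:E)).
rewrite EFinM lee_wpmul2l ?lee_fin //.
apply: le_trans (sum_prob_ltn_le_integral P mT M); rewrite -sumEFin lee_sum // => k _.
by move: (lt_T k); rewrite -lee_fin -probE.
Qed.

End cost.

Lemma bernoulli_ineq (R : realFieldType) (x : R) n :
  0 <= x -> 1 + n%:R * x <= (1 + x) ^+ n.
Proof.
move=> x0; elim: n => [|n IH]; first by rewrite mul0r addr0 expr0.
rewrite exprS -natr1; apply: (@le_trans _ _ ((1 + x) * (1 + n%:R * x))).
  by have := mulr_ge0 (mulr_ge0 (ler0n R n) x0) x0; nra.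
by rewrite ler_wpM2l // addr_ge0.
Qed.

Lemma geometric_sum_unbounded (R : realType) (s t n : R) :
  0 < s <= 1 -> t * s < n -> exists M, t < n * \sum_(k < M) (1 - s) ^+ k.
Proof.
move=> /andP[s0 s1] tsn.
have r1 : `|1 - s| < 1 by rewrite ger0_norm ?subr_ge0 // ltrBlDr ltrDl.
have : \forall M \near \oo, n * (1 - s) ^+ M < n - t * s.
  apply: (@cvgr_lt _ _ _ _ (fun M => n * (1 - s) ^+ M) 0); last by rewrite subr_gt0.
  by rewrite -(mulr0 n); exact: (cvgM (cvg_cst n) (cvg_expr r1)).
move=> [M _ /(_ M (leqnn M)) hM]; exists M.
have geom : (\sum_(k < M) (1 - s) ^+ k) * s = 1 - (1 - s) ^+ M.
  by apply: oppr_inj; rewrite opprB subrX1; ring.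
by rewrite -(ltr_pM2r s0) -mulrA geom; lra.
Qed.

Lemma sqrt_bound_ratio_expr_lt (R : realType) (K Rr : nat) (t X : R) :
  (0 < K)%N -> 0 < t -> 0 < X -> Num.sqrt (t * X / K%:R) <= Rr%:R ->
  t * (X / (1 + X)) ^+ Rr < (K * Rr)%:R.
Proof.
move=> K0 t0 X0 hR.
have K0' : 0 < K%:R :> R by rewrite ltr0n.
have a0 : 0 < t * X / K%:R by rewrite !divr_gt0 ?mulr_gt0.
have R0 : 0 < Rr%:R :> R by apply: lt_le_trans hR; rewrite sqrtr_gt0.
have tXR : t * X <= K%:R * Rr%:R ^+ 2.
  rewrite -ler_pdivrMl // mulrC -(sqr_sqrtr (ltW a0)).
  by rewrite lerXn2r ?nnegrE ?sqrtr_ge0 // ler0n.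
have qR : (X / (1 + X)) ^+ Rr * (1 + Rr%:R / X) <= 1.
  have qX : X / (1 + X) * (1 + X^-1) = 1.
    by field; rewrite (gt_eqF X0) gt_eqF // addr_gt0.
  apply: (@le_trans _ _ ((X / (1 + X)) ^+ Rr * (1 + X^-1) ^+ Rr)).
    apply: ler_wpM2l; first by rewrite exprn_ge0 // divr_ge0 ?addr_ge0 // ltW.
    by rewrite bernoulli_ineq // invr_ge0 ltW.
  by rewrite -exprMn qX expr1n.
set s := (X / (1 + X)) ^+ Rr in qR *.
have s0 : 0 <= s by rewrite exprn_ge0 // divr_ge0 ?addr_ge0 ?ltW.
have sXR : s * (X + Rr%:R) <= X.
  have -> : s * (X + Rr%:R) = s * (1 + Rr%:R / X) * X by field; rewrite gt_eqF.
  by rewrite -[leRHS]mul1r ler_wpM2r // ltW.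
rewrite natrM -(ltr_pM2r (addr_gt0 X0 R0)).
have := mulr_gt0 (mulr_gt0 K0' R0) X0; nra.
Qed.

Lemma defended_blocks_in {d dL : measure_display} {Om : measurableType d}
    {Lam : measurableType dL} (Y : nat -> Om -> Lam) {Pr : Type}
    (Bn : Pr -> seq Lam -> Prop) (p : Pr) K Rr j w :
  defended K Rr Bn p (log_of (K * Rr) Y j w) ->
  blocks_in Y Rr [set L : K.-tuple Lam | Bn p (tval L)] j Rr w.
Proof. by move=> [_ accepted] g gR; rewrite /= -log_of_block //; exact: accepted. Qed.

Lemma defended_cost_gt {R : realType} {dL : measure_display} {Lam : measurableType dL}
    (D : set (probability Lam R)) {d : measure_display} {Om : measurableType d}
    (P : probability Om R) (F : nat -> set (set Om)) (Y : nat -> Om -> Lam)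
    (mu : nat -> Om -> probability Lam R) {Pr : Type} (Bn : Pr -> seq Lam -> Prop) (p : Pr)
    (K Rr : nat) (X t : R) (T J : Om -> nat) :
  random_search_run D P F Y mu ->
  (0 < K)%N -> 0 < t -> 0 < X -> Num.sqrt (t * X / K%:R) <= Rr%:R ->
  measurable [set L : K.-tuple Lam | Bn p (tval L)] ->
  rare_block P F Y [set L : K.-tuple Lam | Bn p (tval L)] (X / (1 + X)) ->
  measurable_fun setT T ->
  {ae P, forall w, (J w < T w)%N /\ defended K Rr Bn p (log_of (K * Rr) Y (J w) w)} ->
  (t%:E < \int[P]_w ((((K * Rr) * T w)%N)%:R)%:E)%E.
Proof.
move=> run K0 t0 X0 hR mA rareA mT accepted.
have q0 : 0 <= X / (1 + X) by rewrite divr_ge0 ?addr_ge0 // ltW.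
have q1 : X / (1 + X) <= 1 by rewrite ler_pdivrMr ?addr_gt0 // mul1r lerDr.
have s01 : 0 < (X / (1 + X)) ^+ Rr <= 1.
  by rewrite exprn_gt0 ?divr_gt0 ?addr_gt0 // exprn_ile1.
have [M tM] := geometric_sum_unbounded s01 (sqrt_bound_ratio_expr_lt K0 t0 X0 hR).
have accepted_blocks : {ae P, forall w,
    (J w < T w)%N /\ blocks_in Y Rr [set L : K.-tuple Lam | Bn p (tval L)] (J w) Rr w}.
  case: accepted => N [mN PN0 sub]; exists N; split => // w notacc; apply: sub => -[JT acc].
  by apply: notacc; split => //; exact: defended_blocks_in.
apply: lt_le_trans (expected_cost_ge run mA q0 q1 rareA mT accepted_blocks M).
by rewrite lte_fin.
Qed.

Unset Implicit Arguments. Set Strict Implicit. Set Printing Implicit Defensive.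

Theorem mainTheorem1 (R : realType) (dL : measure_display) (Lam : measurableType dL)
  (D : set (probability Lam R)) (gamma : R)
  (hD : forall mu nu : probability Lam R, D mu -> D nu ->
          forall A : set Lam, measurable A -> (mu A <= (expR gamma)%:E * nu A)%E)
  (Pr : Type) (neg : Pr -> Pr) (Bn : Pr -> seq Lam -> Prop) (K Rr : nat) (t : R)
  (hK : (0 < K)%N)
  (hBn_size : forall p L, Bn p L -> size L = K)
  (hBn_cons : forall p L, ~ (Bn p L /\ Bn (neg p) L))
  (hBn_meas : forall p, measurable [set L : K.-tuple Lam | Bn p (tval L)])
  (ht : 0 < t)
  (hR : Num.sqrt (t * expR (gamma * K%:R) / K%:R) <= Rr%:R) :
  non_deceptive neg D (K * Rr)%N t (defended K Rr Bn).
Proof.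
move=> p [[d1 [Om1 [P1 [F1 [Y1 [mu1 [T1 [J1 [run1 mT1 accepted1 cost1]]]]]]]]]
          [d2 [Om2 [P2 [F2 [Y2 [mu2 [T2 [J2 [run2 mT2 accepted2 cost2]]]]]]]]]].
rewrite expRM_natr in hR; have X0 : 0 < expR gamma ^+ K by rewrite exprn_gt0 ?expR_gt0.
have disjoint :
    [set L : K.-tuple Lam | Bn p (tval L)] `&` [set L | Bn (neg p) (tval L)] = set0.
  by apply/seteqP; split => // L; exact: hBn_cons.
have [rare|rare] := rare_block_dichotomy hD run1 run2 (hBn_meas p) (hBn_meas (neg p)) disjoint.
  have := defended_cost_gt run1 hK ht X0 hR (hBn_meas p) rare mT1 accepted1.
  by rewrite ltNge cost1.
have := defended_cost_gt run2 hK ht X0 hR (hBn_meas (neg p)) rare mT2 accepted2.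
by rewrite ltNge cost2.
Qed.
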